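(* Let $A,B$ be Pareto sets of size $n$ each, sorted lexicographically, and let $k$ be the size of their Pareto sum. The Successive Binary Search algorithm computes the Pareto sum of $A$ and $B$ in $\mathcal{O}(nk\log n)$ time using $\mathcal{O}(n+k)$ space.
   Context: For $p,p'\in\mathbb{R}^2$, $p$ dominates $p'$ if $p\neq p'$, $p.x\le p'.x$ and $p.y\le p'.y$. A Pareto set is a set $S\subset\mathbb{R}^2$ in which no point dominates another; $S_i$ denotes its element of rank $i$ in lexicographic order. The Minkowski matrix is $M_{ij}=A_i+B_j$ (computed on demand); each column is a sorted Pareto set. The Pareto sum $C$ is the set of entries of $M$ not dominated by any entry of $M$. A range-minimum oracle, given $[x_{\min},x_{\max})\times[y_{\min},y_{\max})$, returns the lexicographically smallest entry of $M$ in that range (or reports none). The successive algorithm: set $C=\{M_{11},M_{nn}\}$, $x_{\min}=M_{11}.x$, $x_{\max}=M_{nn}.x$, $y_{\min}=M_{nn}.y$, $y_{\max}=M_{11}.y$; repeatedly query the oracle; if it returns a point $m$, add $m$ to $C$ and set $x_{\min}=m.x$, $y_{\max}=m.y$; otherwise stop. In Successive Binary Search the oracle is implemented as follows: in each column, binary searches find the first row $f_x$ with $x$-coordinate $\ge x_{\min}$, the last row $l_x$ with $x$-coordinate $<x_{\max}$, the first row $f_y$ with $y$-coordinate $<y_{\max}$ and the last row $l_y$ with $y$-coordinate $\ge y_{\min}$; if $[f_x,l_x]\cap[f_y,l_y]\neq\emptyset$, the entry in row $\max(f_x,f_y)$ is that column's candidate; the oracle returns the lexicographically smallest candidate over all columns.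 *)

From HB Require Import structures.
From mathcomp Require Import all_boot all_order all_algebra.
Set Implicit Arguments. Unset Strict Implicit. Unset Printing Implicit Defensive.
Import Order.TTheory GRing.Theory Num.Theory.
Local Open Scope ring_scope.

Section Pareto.
Variable R : realDomainType.

Definition point := (R * R)%type.

Definition dominates (p q : point) : bool :=
  [&& p != q, p.1 <= q.1 & p.2 <= q.2].

Definition pareto_set (S : seq point) : Prop :=
  {in S &, forall p q, ~~ dominates p q}.

Definition lexlt (p q : point) : bool :=
  (p.1 < q.1) || ((p.1 == q.1) && (p.2 < q.2)).

Definition padd (p q : point) : point := (p.1 + q.1, p.2 + q.2).

(* Minkowski matrix entry M_{ij} = A_i + B_j (0-based indices), computed on demand *)
Definition mentry (A B : seq point) (i j : nat) : point :=
  padd (nth (0, 0) A i) (nth (0, 0) B j).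

Definition minkowski_entries (A B : seq point) : seq point :=
  [seq padd a b | a <- A, b <- B].

Definition pareto_sum (A B : seq point) : seq point :=
  undup [seq m <- minkowski_entries A B |
           ~~ has (fun m' => dominates m' m) (minkowski_entries A B)].

(* Binary search on [lo, hi) for the first index satisfying the (monotone)
   predicate p (returns hi if none); second component = number of probes. *)
Fixpoint bsearch (p : nat -> bool) (fuel lo hi : nat) : nat * nat :=
  match fuel with
  | 0 => (lo, 0)
  | f.+1 =>
    if lo < hi then
      let mid := (lo + hi)./2 in
      if p mid then let: (r, c) := bsearch p f lo mid in (r, c.+1)
      else let: (r, c) := bsearch p f mid.+1 hi in (r, c.+1)
    else (lo, 0)
  end%N.

(* Candidate of column j for the range [xmin,xmax) x [ymin,ymax), with cost.
   f_x = fx, l_x = gx - 1, f_y = fy, l_y = gy - 1; the intersection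
   [f_x,l_x] /\ [f_y,l_y] is nonempty iff max fx fy < min gx gy. *)
Definition col_candidate (A B : seq point) (n j : nat) (xmin xmax ymin ymax : R)
  : option point * nat :=
  let e i := mentry A B i j in
  let: (fx, c1) := bsearch (fun i => xmin <= (e i).1) n 0 n in
  let: (gx, c2) := bsearch (fun i => xmax <= (e i).1) n 0 n in
  let: (fy, c3) := bsearch (fun i => (e i).2 < ymax) n 0 n in
  let: (gy, c4) := bsearch (fun i => (e i).2 < ymin) n 0 n in
  let lo := maxn fx fy in
  let hi := minn gx gy in
  (if (lo < hi)%N then Some (e lo) else None, (c1 + c2 + c3 + c4 + 1)%N).

Definition lexmin_opt (o1 o2 : option point) : option point :=
  match o1, o2 with
  | Some p, Some q => Some (if lexlt q p then q else p)
  | None, o => o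
  | o, None => o
  end.

Definition oracle (A B : seq point) (n : nat) (xmin xmax ymin ymax : R)
  : option point * nat :=
  foldl (fun acc j =>
           let: (c, t) := col_candidate A B n j xmin xmax ymin ymax in
           (lexmin_opt acc.1 c, (acc.2 + t + 1)%N))
        (None, 0%N) (iota 0 n).

(* constant number of auxiliary memory words (xmin,xmax,ymin,ymax, counters,
   current candidate, ...) *)
Definition aux_words : nat := 16.

(* memory in use: the input (2n points), the output list C and O(1) words *)
Definition mem_used (n : nat) (C : seq point) : nat := (2 * n + size C + aux_words)%N.

Fixpoint sbs_loop (A B : seq point) (n fuel : nat) (C : seq point)
  (xmin xmax ymin ymax : R) (t s : nat) : seq point * nat * nat :=
  match fuel with
  | 0 => (C, t, s)
  | f.+1 =>
    let: (r, c) := oracle A B n xmin xmax ymin ymax in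
    match r with
    | None => (C, (t + c + 1)%N, s)
    | Some m =>
      let C' := rcons C m in
      sbs_loop A B n f C' m.1 xmax ymin m.2 (t + c + 1)%N (maxn s (mem_used n C'))
    end
  end.

Definition sbs (A B : seq point) : seq point * nat * nat :=
  let n := size A in
  let M11 := mentry A B 0 0 in
  let Mnn := mentry A B n.-1 n.-1 in
  sbs_loop A B n (n * n).+1 [:: M11; Mnn] M11.1 Mnn.1 Mnn.2 M11.2
           1%N (mem_used n [:: M11; Mnn]).

Definition sbs_output A B : seq point := (sbs A B).1.1.
Definition sbs_time A B : nat := (sbs A B).1.2.
Definition sbs_space A B : nat := (sbs A B).2.

End Pareto.

From mathcomp Require Import all_boot all_order all_algebra zify.
Set Implicit Arguments. Unset Strict Implicit. Unset Printing Implicit Defensive.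
Import Order.TTheory GRing.Theory Num.Theory.
Local Open Scope ring_scope.

(* Down a column of the Minkowski matrix the abscissa increases and the ordinate
   decreases strictly, so the rows of a column lying in an axis-parallel box form
   an interval, whose ends are found by four binary searches and whose first row is
   the lexicographically smallest entry of the column in the box; one oracle call
   thus costs O(n log n).
   The successive algorithm maintains that C holds exactly the Pareto points of
   abscissa at most xmin, that (xmin, ymax) is itself a Pareto point and that no
   entry lies strictly left of xmin and below ymax.  The lexicographic minimum of
   the box [xmin, Mnn.x) x [Mnn.y, ymax) is then the next Pareto point to the right,
   and an empty box means that C is complete.  Every call but the last finds a new
   Pareto point, so there are at most k + 1 calls and C never exceeds k + 2 points. *)

Lemma bsearchP (p : nat -> bool) f lo hi :
  (hi - lo <= f)%N -> (lo <= hi)%N ->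
  (forall i j, lo <= i <= j -> j < hi -> p i -> p j)%N ->
  (lo <= (bsearch p f lo hi).1 <= hi)%N /\
  (forall i, lo <= i < hi -> p i = ((bsearch p f lo hi).1 <= i))%N.
Proof.
elim: f lo hi => [|f IH] lo hi f_ge lo_le mono /=.
  have -> : hi = lo by lia.
  by split=> [|i]; lia.
case: (ltnP lo hi) => [lo_lt|hi_le] /=; last first.
  have -> : hi = lo by lia.
  by split=> [|i]; lia.
have mid_in : (lo <= (lo + hi)./2 < hi)%N by lia.
set mid := (lo + hi)./2 in mid_in *.
case: ifP => p_mid.
  have [] := IH lo mid; [lia | lia | move=> i j *; apply: (mono i) => //; lia |].
  case: (bsearch p f lo mid) => r c /= r_in rP; split=> [|i i_in]; first lia.
  have [i_lt|i_ge] := ltnP i mid; first by apply: rP; lia.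
  by rewrite (mono mid i) //; [apply/esym/idP | |]; lia.
have [] := IH mid.+1 hi; [lia | lia | move=> i j *; apply: (mono i) => //; lia |].
case: (bsearch p f mid.+1 hi) => r c /= r_in rP; split=> [|i i_in]; first lia.
have [i_gt|i_le] := ltnP mid i; first by apply: rP; lia.
have -> : (r <= i)%N = false by lia.
by apply: contraFF p_mid; apply: mono; lia.
Qed.

Lemma bsearch_cost (p : nat -> bool) f lo hi L :
  (hi - lo < 2 ^ L)%N -> ((bsearch p f lo hi).2 <= L)%N.
Proof.
elim: f lo hi L => [|f IH] lo hi [|L] //=; case: (ltnP lo hi) => // lo_lt; rewrite ?expnS.
  by rewrite expn0; lia.
move=> hL; case: ifP => _.
  by case: (bsearch p f lo _) (IH lo (lo + hi)./2 L) => r c /= IH'; rewrite ltnS IH' //; lia.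
by case: (bsearch p f _ hi) (IH (lo + hi)./2.+1 hi L) => r c /= IH'; rewrite ltnS IH' //; lia.
Qed.

Lemma sub_count_lt (T : eqType) (a b : pred T) (s : seq T) x :
  subpred b a -> x \in s -> a x -> ~~ b x -> (count b s < count a s)%N.
Proof.
move=> ba; elim: s => [//|y s IH]; rewrite inE /= => /predU1P [<- ax bx|x_s ax bx].
  by rewrite ax (negbTE bx) add0n add1n ltnS sub_count.
have := IH x_s ax bx; case: (boolP (b y)) => [/ba -> | _] /=; lia.
Qed.

Section Points.
Variable R : realDomainType.
Implicit Types (p q : point R) (S : pred (point R)).

Lemma lexltE p q : lexlt p q = ((p : R *l R) < q)%O.
Proof. by rewrite ltEprodlexi /lexlt /=; case: ltgtP. Qed.

Lemma lexlt_trans : transitive (@lexlt R).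
Proof. by move=> q p r; rewrite !lexltE; apply: lt_trans. Qed.

Lemma lexlt_lt1 p q : p.1 < q.1 -> lexlt p q.
Proof. by rewrite /lexlt => ->. Qed.

Lemma dominates_lexlt p q : dominates p q -> lexlt p q.
Proof.
case: p q => [p1 p2] [q1 q2]; rewrite /dominates /lexlt /= xpair_eqE.
case/and3P => neq le1 le2; rewrite lt_neqAle le1 andbT.
by case: eqVneq neq => //= _; rewrite lt_neqAle le2 andbT.
Qed.

Lemma lexlt_not_dominates p q :
  lexlt p q -> ~~ dominates p q -> p.1 < q.1 /\ q.2 < p.2.
Proof.
case: p q => [p1 p2] [q1 q2]; rewrite /lexlt /dominates /= xpair_eqE.
case/orP => [lt1 | /andP [/eqP <- lt2]].
  by rewrite (ltW lt1) (lt_eqF lt1) /= -ltNge.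
by rewrite eqxx lexx (ltW lt2) (lt_eqF lt2).
Qed.

Lemma not_dominates_lt2 p q :
  ~~ dominates q p -> q != p -> q.1 <= p.1 -> p.2 < q.2.
Proof. by move=> + neq le1; rewrite /dominates neq le1 ltNge. Qed.

Lemma sorted_pareto_lt (s : seq (point R)) i j :
  pareto_set s -> sorted (@lexlt R) s -> (i < j < size s)%N ->
  (nth (0, 0) s i).1 < (nth (0, 0) s j).1 /\ (nth (0, 0) s j).2 < (nth (0, 0) s i).2.
Proof.
move=> pareto_s sorted_s /andP [lt_ij lt_js]; have lt_is := ltn_trans lt_ij lt_js.
apply: lexlt_not_dominates; last by apply: pareto_s; apply: mem_nth.
by apply: (sorted_ltn_nth lexlt_trans) => //; rewrite inE.
Qed.

Lemma sorted_pareto_le (s : seq (point R)) i j :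
  pareto_set s -> sorted (@lexlt R) s -> (i <= j < size s)%N ->
  (nth (0, 0) s i).1 <= (nth (0, 0) s j).1 /\ (nth (0, 0) s j).2 <= (nth (0, 0) s i).2.
Proof.
move=> pareto_s sorted_s /andP []; rewrite leq_eqVlt => /predU1P [-> //| lt_ij lt_js].
have [lt1 lt2] := sorted_pareto_lt pareto_s sorted_s (i := i) (j := j) ltac:(lia).
by split; apply: ltW.
Qed.

Definition in_box (xmin xmax ymin ymax : R) (q : point R) : bool :=
  [&& xmin <= q.1, q.1 < xmax, ymin <= q.2 & q.2 < ymax].

Definition lexmin_of S (o : option (point R)) : Prop :=
  if o is Some m then S m /\ forall q, S q -> ((m : R *l R) <= q)%O
  else forall q, ~~ S q.

Lemma eq_lexmin_of S1 S2 o : S1 =1 S2 -> lexmin_of S1 o -> lexmin_of S2 o.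
Proof.
move=> eqS; case: o => [m [S1m minm]|none q] /=; last by rewrite -eqS.
by split=> [|q]; rewrite -eqS // => /minm.
Qed.

Lemma lexmin_opt_predU S1 S2 o1 o2 : lexmin_of S1 o1 -> lexmin_of S2 o2 ->
  lexmin_of (predU S1 S2) (lexmin_opt o1 o2).
Proof.
case: o1 o2 => [p|] [q|] /=.
- move=> [S1p minp] [S2q minq]; rewrite lexltE.
  case: ltP => [lt_qp | le_pq]; split=> [|x]; rewrite /= ?S1p ?S2q ?orbT //.
    by case/orP => [/minp | /minq //]; apply: le_trans (ltW lt_qp).
  by case/orP => [/minp // | /minq]; apply: le_trans le_pq.
- move=> [S1p minp] none2; split=> [|x]; first by rewrite /= S1p.
  by case/orP => [/minp // | S2x]; move: (none2 x); rewrite S2x.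
- move=> none1 [S2q minq]; split=> [|x]; first by rewrite /= S2q orbT.
  by case/orP => [S1x | /minq //]; move: (none1 x); rewrite S1x.
- by move=> none1 none2 x; rewrite /= negb_or none1 none2.
Qed.

End Points.

Section ParetoSum.
Variables (R : realDomainType) (A B : seq (point R)).
Local Notation E := (minkowski_entries A B).
Local Notation P := (pareto_sum A B).

Lemma mem_pareto_sum p : (p \in P) = (p \in E) && ~~ has (fun q => dominates q p) E.
Proof. by rewrite mem_undup mem_filter andbC. Qed.

Lemma pareto_sum_entry : {subset P <= E}.
Proof. by move=> p; rewrite mem_pareto_sum => /andP []. Qed.

Lemma pareto_sum_undominated p q : p \in P -> q \in E -> ~~ dominates q p.
Proof. by rewrite mem_pareto_sum => /andP [_ /hasPn nd] /nd. Qed.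

Lemma pareto_sum_lt2 p q : p \in P -> q \in E -> q != p -> q.1 <= p.1 -> p.2 < q.2.
Proof. by move=> pP qE; apply: not_dominates_lt2; apply: pareto_sum_undominated. Qed.

Lemma pareto_sum_inj1 p q : p \in P -> q \in P -> p.1 = q.1 -> p = q.
Proof.
move=> pP qP eq1; apply/eqP; apply: contraT => neq.
have := pareto_sum_lt2 qP (pareto_sum_entry pP) neq; rewrite eq1 lexx => /(_ isT).
have := pareto_sum_lt2 pP (pareto_sum_entry qP); rewrite eq_sym neq eq1 lexx.
by move=> /(_ isT isT) /lt_trans lt_qq /lt_qq; rewrite ltxx.
Qed.

Lemma pareto_sum_anti p q : p \in P -> q \in E -> q.1 < p.1 -> p.2 < q.2.
Proof.
move=> pP qE lt1; apply: pareto_sum_lt2 (ltW lt1) => //.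
by apply: contraTneq lt1 => ->; rewrite ltxx.
Qed.

End ParetoSum.

Section Minkowski.
Variables (R : realDomainType) (A B : seq (point R)) (n : nat).
Hypotheses (sizeA : size A = n) (sizeB : size B = n)
  (paretoA : pareto_set A) (paretoB : pareto_set B)
  (sortedA : sorted (@lexlt R) A) (sortedB : sorted (@lexlt R) B).

Local Notation e := (mentry A B).
Local Notation E := (minkowski_entries A B).
Local Notation P := (pareto_sum A B).

Lemma mentry_le i i' j j' : (i <= i' < n)%N -> (j <= j' < n)%N ->
  (e i j).1 <= (e i' j').1 /\ (e i' j').2 <= (e i j).2.
Proof.
rewrite -{1}sizeA -sizeB => hi hj.
have [a1 a2] := sorted_pareto_le paretoA sortedA hi.
have [b1 b2] := sorted_pareto_le paretoB sortedB hj.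
by split; apply: lerD.
Qed.

Lemma mentry_lt i i' j j' : (i <= i' < n)%N -> (j <= j' < n)%N ->
  (i < i')%N || (j < j')%N -> (e i j).1 < (e i' j').1 /\ (e i' j').2 < (e i j).2.
Proof.
rewrite -{1}sizeA -sizeB => hi hj /orP [lt_i | lt_j].
  have [a1 a2] := sorted_pareto_lt paretoA sortedA (i := i) (j := i') ltac:(lia).
  have [b1 b2] := sorted_pareto_le paretoB sortedB hj.
  by split; apply: ltr_leD.
have [a1 a2] := sorted_pareto_le paretoA sortedA hi.
have [b1 b2] := sorted_pareto_lt paretoB sortedB (i := j) (j := j') ltac:(lia).
by split; apply: ler_ltD.
Qed.

Lemma entriesP q :
  reflect (exists i j, [/\ (i < n)%N, (j < n)%N & q = e i j]) (q \in E).
Proof.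
apply: (iffP allpairsP) => [[[a b] /= [aA bB ->]] | [i [j [hi hj ->]]]].
  exists (index a A), (index b B); rewrite /mentry !nth_index //.
  by split=> //; [rewrite -sizeA | rewrite -sizeB]; rewrite index_mem.
exists (nth (0, 0) A i, nth (0, 0) B j).
by split=> //; apply: mem_nth; rewrite ?sizeA ?sizeB.
Qed.

Lemma mentry_min1 q : q \in E -> q.1 <= (e 0 0).1 -> q = e 0 0.
Proof.
case/entriesP => i [j [hi hj ->]] le1; apply/eqP; apply: contraLR le1 => neq.
have nz : (0 < i)%N || (0 < j)%N.
  by move: neq; case: i {hi} => [|i]; case: j {hj} => [|j]; rewrite ?eqxx.
rewrite -ltNge.
by have [] := mentry_lt (i := 0) (j := 0) (i' := i) (j' := j) ltac:(lia) ltac:(lia) nz.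
Qed.

Lemma mentry_min2 q : q \in E -> q.2 <= (e n.-1 n.-1).2 -> q = e n.-1 n.-1.
Proof.
case/entriesP => i [j [hi hj ->]] le2; apply/eqP; apply: contraLR le2 => neq.
have nz : (i < n.-1)%N || (j < n.-1)%N.
  apply: contraNT neq; rewrite negb_or -!leqNgt => /andP [hi' hj'].
  by have [-> ->] : i = n.-1 /\ j = n.-1 by lia.
rewrite -ltNge.
by have [] := mentry_lt (i := i) (j := j) (i' := n.-1) (j' := n.-1) ltac:(lia) ltac:(lia) nz.
Qed.

Lemma mentry_ge2 q : q \in E -> (e n.-1 n.-1).2 <= q.2.
Proof.
case/entriesP => i [j [hi hj ->]].
by have [] := mentry_le (i := i) (j := j) (i' := n.-1) (j' := n.-1) ltac:(lia) ltac:(lia).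
Qed.

Definition mcolumn j := [seq e i j | i <- iota 0 n].

Lemma mem_entries q : (q \in E) = has (fun j => q \in mcolumn j) (iota 0 n).
Proof.
apply/entriesP/hasP => [[i [j [hi hj ->]]] | [j]].
  by exists j; [rewrite mem_iota; lia | apply/mapP; exists i; rewrite ?mem_iota //; lia].
rewrite mem_iota => /andP [_ hj] /mapP [i].
by rewrite mem_iota => /andP [_ hi] ->; exists i, j.
Qed.

Section Oracle.
Variables xmin xmax ymin ymax : R.
Local Notation box := (in_box xmin xmax ymin ymax).

Lemma col_candidate_lexmin j :
  lexmin_of [pred q | (q \in mcolumn j) && box q]
    (col_candidate A B n j xmin xmax ymin ymax).1.
Proof.
have col_le i i' : (i <= i' < n)%N -> (e i j).1 <= (e i' j).1 /\ (e i' j).2 <= (e i j).2.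
  by rewrite -sizeA => /(sorted_pareto_le paretoA sortedA); rewrite /mentry /= !lerD2r.
have col_lt i i' : (i < i' < n)%N -> (e i j).1 < (e i' j).1.
  by rewrite -sizeA => /(sorted_pareto_lt paretoA sortedA) [lt1 _]; rewrite /mentry /= ltrD2r.
have threshold p r c : bsearch p n 0 n = (r, c) ->
    (forall i i', (i <= i' < n)%N -> p i -> p i') ->
    (r <= n)%N /\ forall i, (i < n)%N -> p i = (r <= i)%N.
  move=> E_p mono; have [|||] := @bsearchP p n 0 n; rewrite ?subn0 //.
    by move=> i i' ? ?; apply: mono; lia.
  by rewrite E_p /= => [r_le rP]; split=> // i; apply: rP.
rewrite /col_candidate; cbv beta zeta.
case E1: (bsearch _ n 0 n) => [fx c1]; have [|fx_le fxP] := threshold _ _ _ E1.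
  by move=> i i' /col_le [le1 _] /le_trans; apply.
case E2: (bsearch _ n 0 n) => [gx c2]; have [|gx_le gxP] := threshold _ _ _ E2.
  by move=> i i' /col_le [le1 _] /le_trans; apply.
case E3: (bsearch _ n 0 n) => [fy c3]; have [|fy_le fyP] := threshold _ _ _ E3.
  by move=> i i' /col_le [_ le2] /(le_lt_trans le2).
case E4: (bsearch _ n 0 n) => [gy c4]; have [|gy_le gyP] := threshold _ _ _ E4.
  by move=> i i' /col_le [_ le2] /(le_lt_trans le2).
have boxE i : (i < n)%N -> box (e i j) = (maxn fx fy <= i < minn gx gy)%N.
  move=> hi; rewrite /in_box ltNge (leNgt ymin) fxP // gxP // fyP // gyP //.
  by apply/idP/idP; lia.
case: ifP => [lo_lt | lo_ge] /=; last first.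
  by move=> q; apply/andP => -[/mapP [i]]; rewrite mem_iota => i_in ->; rewrite boxE; lia.
split=> [|q].
  rewrite /= boxE ?leqnn ?lo_lt ?andbT; last lia.
  by apply: map_f; rewrite mem_iota; lia.
case/andP => /mapP [i]; rewrite mem_iota => i_in ->; rewrite boxE; last lia.
move=> i_box; have [lt_lo_i | <-] : (maxn fx fy < i)%N \/ maxn fx fy = i by lia.
  by apply: ltW; rewrite -lexltE lexlt_lt1 //; apply: col_lt; lia.
exact: lexx.
Qed.

Lemma col_candidate_cost j :
  ((col_candidate A B n j xmin xmax ymin ymax).2 <= 4 * (trunc_log 2 n).+1 + 1)%N.
Proof.
have cost p r c : bsearch p n 0 n = (r, c) -> (c <= (trunc_log 2 n).+1)%N.
  by move=> E_p; rewrite -[c]/((r, c).2) -E_p bsearch_cost // subn0 trunc_log_ltn.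
rewrite /col_candidate; cbv beta zeta.
case E1: (bsearch _ n 0 n) => [fx c1]; case E2: (bsearch _ n 0 n) => [gx c2].
case E3: (bsearch _ n 0 n) => [fy c3]; case E4: (bsearch _ n 0 n) => [gy c4] /=.
have := cost _ _ _ E1; have := cost _ _ _ E2; have := cost _ _ _ E3.
by have := cost _ _ _ E4; lia.
Qed.

Definition oracle_step (acc : option (point R) * nat) j :=
  let: (c, t) := col_candidate A B n j xmin xmax ymin ymax in
  (lexmin_opt acc.1 c, (acc.2 + t + 1)%N).

Lemma foldl_oracle_step_lexmin js acc S0 : lexmin_of S0 acc.1 ->
  lexmin_of [pred q | S0 q || has (fun j => (q \in mcolumn j) && box q) js]
    (foldl oracle_step acc js).1.
Proof.
elim: js acc S0 => [|j js IH] acc S0 /= acc_min.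
  by apply: eq_lexmin_of acc_min => q; rewrite /= orbF.
have step_min :
    lexmin_of (predU S0 [pred q | (q \in mcolumn j) && box q]) (oracle_step acc j).1.
  rewrite /oracle_step; case: col_candidate (col_candidate_lexmin j) => c t /= c_min.
  exact: lexmin_opt_predU.
by apply: eq_lexmin_of (IH _ _ step_min) => q; rewrite /= orbA.
Qed.

Lemma foldl_oracle_step_cost js acc :
  ((foldl oracle_step acc js).2 <= acc.2 + size js * (4 * (trunc_log 2 n).+1 + 2))%N.
Proof.
elim: js acc => [|j js IH] acc /=; first by rewrite addn0.
apply: leq_trans (IH _) _; rewrite /oracle_step.
by case: col_candidate (col_candidate_cost j) => c t /=; rewrite mulSn; lia.
Qed.

Lemma oracle_lexmin :
  lexmin_of [pred q | (q \in E) && box q] (oracle A B n xmin xmax ymin ymax).1.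
Proof.
apply: eq_lexmin_of (foldl_oracle_step_lexmin (iota 0 n) (S0 := pred0) _) => // q.
rewrite /= mem_entries; case: (box q); rewrite ?andbT ?andbF.
  exact: (eq_has (fun j => andbT _)).
by apply/hasPn => j _; rewrite andbF.
Qed.

Lemma oracle_cost :
  ((oracle A B n xmin xmax ymin ymax).2 <= n * (4 * (trunc_log 2 n).+1 + 2))%N.
Proof. by have := foldl_oracle_step_cost (iota 0 n) (None, 0%N); rewrite size_iota. Qed.

End Oracle.

Hypothesis n_gt0 : (0 < n)%N.

Local Notation M11 := (e 0 0).
Local Notation Mnn := (e n.-1 n.-1).
Local Notation box xm ym := (in_box xm Mnn.1 Mnn.2 ym).
Local Notation right_of xm := (count (fun p : point R => xm < p.1) P).
Local Notation K := (n * (4 * (trunc_log 2 n).+1 + 2))%N.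

Lemma M11_pareto : M11 \in P.
Proof.
have M11E : M11 \in E by apply/entriesP; exists 0%N, 0%N.
rewrite mem_pareto_sum M11E; apply/hasPn => q qE; apply/negP => /and3P [neq le1 _].
by rewrite (mentry_min1 qE le1) eqxx in neq.
Qed.

Lemma Mnn_pareto : Mnn \in P.
Proof.
have MnnE : Mnn \in E by apply/entriesP; exists n.-1, n.-1; split=> //; lia.
rewrite mem_pareto_sum MnnE; apply/hasPn => q qE; apply/negP => /and3P [neq _ le2].
by rewrite (mentry_min2 qE le2) eqxx in neq.
Qed.

Lemma size_pareto_sum_gt0 : (0 < size P)%N.
Proof. by case: (pareto_sum A B) M11_pareto. Qed.

Lemma in_box_entry xm ym q :
  q \in E -> box xm ym q = [&& xm <= q.1, q.1 < Mnn.1 & q.2 < ym].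
Proof. by move=> qE; rewrite /in_box (mentry_ge2 qE). Qed.

Definition sbs_inv (C : seq (point R)) (xm ym : R) : Prop :=
  [/\ Mnn \in C, {subset C <= P}, (xm, ym) \in P,
      {in P, forall p, p.1 <= xm -> p \in C} &
      {in E, forall q, q.1 < xm -> ym <= q.2}].

Lemma sbs_inv_complete C xm ym : sbs_inv C xm ym ->
  (forall q, ~~ ((q \in E) && box xm ym q)) -> {subset P <= C}.
Proof.
case=> Mnn_C _ xy_P left_C _ none p pP; have pE := pareto_sum_entry pP.
have [le_px|lt_xp] := leP p.1 xm; first exact: left_C.
have lt_py := pareto_sum_anti pP (pareto_sum_entry xy_P) lt_xp.
have [lt_pX|ge_pX] := ltP p.1 Mnn.1.
  by move: (none p); rewrite pE in_box_entry // (ltW lt_xp) lt_pX lt_py.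
suff -> : p = Mnn by [].
apply/eqP; apply: contraT => neq; rewrite eq_sym in neq.
have := pareto_sum_lt2 pP (pareto_sum_entry Mnn_pareto) neq ge_pX.
by rewrite ltNge (mentry_ge2 pE).
Qed.

Lemma lexmin_box_pareto C xm ym m : sbs_inv C xm ym ->
  lexmin_of [pred q | (q \in E) && box xm ym q] (Some m) -> m \in P.
Proof.
case=> _ _ _ _ below [/andP [mE m_box] m_min].
rewrite in_box_entry // in m_box; case/and3P: m_box => _ lt_mX lt_my.
rewrite mem_pareto_sum mE; apply/hasPn => q qE; apply/negP => q_dom.
have /andP [le1 le2] : (q.1 <= m.1) && (q.2 <= m.2) by case/and3P: q_dom => _ -> ->.
have [lt_qx|ge_qx] := ltP q.1 xm.
  by have := below q qE lt_qx; rewrite leNgt (le_lt_trans le2 lt_my).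
have q_box : (q \in E) && box xm ym q.
  by rewrite qE in_box_entry // ge_qx (le_lt_trans le1 lt_mX) (le_lt_trans le2 lt_my).
by have := m_min q q_box; rewrite leNgt -lexltE dominates_lexlt.
Qed.

Lemma sbs_inv_rcons C xm ym m : sbs_inv C xm ym ->
  lexmin_of [pred q | (q \in E) && box xm ym q] (Some m) ->
  sbs_inv (rcons C m) m.1 m.2 /\ xm < m.1.
Proof.
move=> inv m_lexmin; have mP := lexmin_box_pareto inv m_lexmin.
case: inv => Mnn_C C_P xy_P left_C below; case: m_lexmin => /andP [mE m_box] m_min.
rewrite in_box_entry // in m_box; case/and3P: m_box => le_xm lt_mX lt_my.
have lt_xm : xm < m.1.
  rewrite lt_neqAle le_xm andbT; apply/eqP => eq_mx.
  by rewrite -(pareto_sum_inj1 xy_P mP eq_mx) ltxx in lt_my.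
split=> //; split.
- by rewrite mem_rcons inE Mnn_C orbT.
- by move=> p; rewrite mem_rcons inE => /predU1P [-> | /C_P].
- by rewrite -surjective_pairing.
- move=> p pP le_pm; rewrite mem_rcons inE.
  have [le_px|lt_xp] := leP p.1 xm; first by rewrite left_C ?orbT.
  have lt_py := pareto_sum_anti pP (pareto_sum_entry xy_P) lt_xp.
  have p_box : (p \in E) && box xm ym p.
    rewrite pareto_sum_entry // in_box_entry ?pareto_sum_entry //.
    by rewrite (ltW lt_xp) (le_lt_trans le_pm lt_mX).
  have := m_min p p_box; rewrite leEprodlexi => /andP [le_mp _].
  by rewrite (pareto_sum_inj1 pP mP) ?eqxx //; apply/eqP; rewrite eq_le le_pm.
- move=> q qE lt_qm.
  have [lt_qx|ge_qx] := ltP q.1 xm; first exact: le_trans (ltW lt_my) (below q qE lt_qx).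
  have [lt_qy|ge_qy] := ltP q.2 ym; last exact: le_trans (ltW lt_my) ge_qy.
  have q_box : (q \in E) && box xm ym q.
    by rewrite qE in_box_entry // ge_qx (lt_trans lt_qm lt_mX) lt_qy.
  by have := m_min q q_box; rewrite leNgt -lexltE lexlt_lt1.
Qed.

Lemma sbs_loop_spec f C xm ym t s : sbs_inv C xm ym -> (right_of xm < f)%N ->
  let: (C', t', s') := sbs_loop A B n f C xm Mnn.1 Mnn.2 ym t s in
  [/\ C' =i P, (t' <= t + (right_of xm).+1 * K.+1)%N &
      (s' <= maxn s (2 * n + size C + right_of xm + aux_words))%N].
Proof.
elim: f C xm ym t s => [//|f IH] C xm ym t s inv f_gt /=.
case: oracle (oracle_lexmin xm Mnn.1 Mnn.2 ym) (oracle_cost xm Mnn.1 Mnn.2 ym).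
case=> [m|] c /= o_min o_cost; last first.
  have [_ C_P _ _ _] := inv; split; last exact: leq_maxl.
    by move=> p; apply/idP/idP => [/C_P | /(sbs_inv_complete inv o_min)].
  by rewrite mulSn; lia.
have [inv' lt_xm] := sbs_inv_rcons inv o_min.
have lt_right : (right_of m.1 < right_of xm)%N.
  apply: (sub_count_lt (x := m)) => /=; last by rewrite ltxx.
  - by move=> p /(lt_trans lt_xm).
  - exact: lexmin_box_pareto inv o_min.
  - exact: lt_xm.
have := IH (rcons C m) m.1 m.2 (t + c + 1)%N (maxn s (mem_used n (rcons C m))) inv'.
case: sbs_loop => [[C' t'] s'] /(_ ltac:(lia)) [C'_P t'_le s'_le]; split=> //.
  have : ((right_of m.1).+2 * K.+1 <= (right_of xm).+1 * K.+1)%N.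
    by rewrite leq_mul2r ltnS lt_right orbT.
  by rewrite mulSn; lia.
by rewrite /mem_used size_rcons in s'_le; lia.
Qed.

Lemma sbs_inv_init : sbs_inv [:: M11; Mnn] M11.1 M11.2.
Proof.
split; first by rewrite !inE eqxx orbT.
- move=> p; rewrite !inE => /predU1P [-> | /eqP ->].
    exact: M11_pareto.
  exact: Mnn_pareto.
- by rewrite -surjective_pairing M11_pareto.
- by move=> p /pareto_sum_entry pE /(mentry_min1 pE) ->; rewrite inE eqxx.
- by move=> q qE lt_q; have := mentry_min1 qE (ltW lt_q); move: lt_q => /[swap] ->; rewrite ltxx.
Qed.

Lemma sbs_spec :
  [/\ sbs_output A B =i P, (sbs_time A B <= 1 + (size P).+1 * K.+1)%N &
      (sbs_space A B <= 2 * n + 2 + size P + aux_words)%N].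
Proof.
have size_P : (size P <= n * n)%N.
  rewrite (leq_trans (size_undup _)) // size_filter (leq_trans (count_size _ _)) //.
  by rewrite size_allpairs sizeA sizeB.
have right_le : (right_of M11.1 <= size P)%N := count_size _ _.
rewrite /sbs_output /sbs_time /sbs_space /sbs sizeA.
have := sbs_loop_spec (f := (n * n).+1) 1 (mem_used n [:: M11; Mnn]) sbs_inv_init.
case: sbs_loop => [[C' t'] s'] /(_ ltac:(lia)) [C'_P t'_le s'_le]; split=> //.
  by apply: leq_trans t'_le _; rewrite leq_add2l leq_mul2r ltnS right_le orbT.
apply: leq_trans s'_le _.
by rewrite /mem_used (_ : size [:: M11; Mnn] = 2%N) // geq_max; lia.
Qed.

End Minkowski.

Theorem mainTheorem7 :
  exists c : nat,
  forall (R : realDomainType) (n : nat) (A B : seq (point R)),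
    (0 < n)%N -> size A = n -> size B = n ->
    pareto_set A -> pareto_set B ->
    sorted (@lexlt R) A -> sorted (@lexlt R) B ->
    let k := size (pareto_sum A B) in
    (forall p, (p \in sbs_output A B) = (p \in pareto_sum A B)) /\
    (sbs_time A B <= c * (n * k * (trunc_log 2 n).+1))%N /\
    (sbs_space A B <= c * (n + k))%N.
Proof.
exists 20%N => R n A B n_gt0 sizeA sizeB paretoA paretoB sortedA sortedB k.
have [out_P time_le space_le] := sbs_spec sizeA sizeB paretoA paretoB sortedA sortedB n_gt0.
have k_gt0 : (0 < k)%N :=
  size_pareto_sum_gt0 sizeA sizeB paretoA paretoB sortedA sortedB n_gt0.
split=> //; split; last by rewrite /aux_words in space_le; lia.
move: time_le; rewrite -/k; set L := (trunc_log 2 n).+1; nia.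
Qed.
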